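(* Let $\varepsilon>0$ and $\delta\in(0,1)$, and let $\pi_{\mathrm{opt}}:\mathbb{N}\to[0,1]$ be defined by $\pi_{\mathrm{opt}}(0)=0$ and $\pi_{\mathrm{opt}}(n+1)=\min\left(e^{\varepsilon}\pi_{\mathrm{opt}}(n)+\delta,\;1-e^{-\varepsilon}(1-\pi_{\mathrm{opt}}(n)-\delta),\;1\right)$ for $n\ge0$. Let $n_1$ be the largest integer $n\ge1$ such that $\pi_{\mathrm{opt}}(n-1)\le \frac{1-\delta}{e^{\varepsilon}+1}$ (equivalently, the last index $n$ for which the first argument $e^{\varepsilon}\pi_{\mathrm{opt}}(n-1)+\delta$ of the minimum is the active one). Then \[ n_1=1+\left\lfloor\frac{1}{\varepsilon}\ln\left(\frac{e^{\varepsilon}+2\delta-1}{\delta(e^{\varepsilon}+1)}\right)\right\rfloor . \]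
   Context: $\mathbb{N}=\{0,1,2,\dots\}$. $\pi_{\mathrm{opt}}$ is the optimal partition selection primitive for $(\varepsilon,\delta)$-differential privacy: the pointwise largest $\pi:\mathbb{N}\to[0,1]$ with $\pi(0)=0$ such that releasing a partition with $n$ users with probability $\pi(n)$ is $(\varepsilon,\delta)$-DP with respect to adding or removing one user; it satisfies the recurrence stated. The value $\frac{1-\delta}{e^{\varepsilon}+1}$ is the point $x$ where $e^{\varepsilon}x+\delta=1-e^{-\varepsilon}(1-x-\delta)$. *)

From Stdlib Require Import Reals Lra Lia ZArith.
Open Scope R_scope.

Fixpoint pi_opt (eps delta : R) (n : nat) : R :=
  match n with
  | O => 0
  | S m =>
      let p := pi_opt eps delta m in
      Rmin (Rmin (exp eps * p + delta) (1 - exp (- eps) * (1 - p - delta))) 1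
  end.

(* floor of a real number: Int_part r = up r - 1 satisfies
   IZR (Int_part r) <= r < IZR (Int_part r) + 1. *)
Definition floorR (r : R) : Z := Int_part r.

(** While [pi_opt n] stays below the crossing point [(1 - delta) / (e^eps + 1)]
    the first branch [e^eps p + delta] of the minimum is the smallest, so there
    [pi_opt n] is the geometric sum [delta (e^(n eps) - 1) / (e^eps - 1)];
    this is at most the crossing point exactly when
    [n <= ln((e^eps + 2 delta - 1) / (delta (e^eps + 1))) / eps].
    Once above the crossing point, each of the three branches stays above it,
    so the sequence never returns below. *)

From Stdlib Require Import Reals ZArith Lra Lia Psatz.
Open Scope R_scope.

Definition pi_opt_step (a d p : R) : R :=
  Rmin (Rmin (a * p + d) (1 - / a * (1 - p - d))) 1.

Lemma pi_opt_S (eps delta : R) (n : nat) :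
  pi_opt eps delta (S n) = pi_opt_step (exp eps) delta (pi_opt eps delta n).
Proof. simpl. unfold pi_opt_step. rewrite exp_Ropp. reflexivity. Qed.

Lemma pi_opt_step_linear (a d p : R) :
  1 <= a -> d <= 1 -> p <= (1 - d) / (a + 1) -> pi_opt_step a d p = a * p + d.
Proof.
  intros Ha Hd Hp.
  assert (Hp' : (a + 1) * p <= 1 - d).
  { apply (Rmult_le_compat_l (a + 1)) in Hp; [|lra].
    replace ((a + 1) * ((1 - d) / (a + 1))) with (1 - d) in Hp by (field; lra).
    exact Hp. }
  assert (Hgap : 1 - / a * (1 - p - d) - (a * p + d)
                 = / a * ((a - 1) * ((1 - d) - (a + 1) * p))).
  { field. lra. }
  assert (0 <= / a * ((a - 1) * ((1 - d) - (a + 1) * p))).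
  { apply Rmult_le_pos; [apply Rlt_le, Rinv_0_lt_compat; lra|].
    apply Rmult_le_pos; lra. }
  assert (a * p + d <= 1) by (destruct (Rle_lt_dec 0 p); nra).
  unfold pi_opt_step.
  rewrite (Rmin_left (a * p + d)) by lra.
  apply Rmin_left; lra.
Qed.

Lemma pi_opt_step_gt (a d p t : R) :
  1 <= a -> 0 <= d -> 0 <= t < 1 -> t < p -> t < pi_opt_step a d p.
Proof.
  intros Ha Hd Ht Hp.
  assert (Hb0 : 0 < / a) by (apply Rinv_0_lt_compat; lra).
  assert (Hb1 : / a <= 1) by (rewrite <- Rinv_1; apply Rinv_le_contravar; lra).
  unfold pi_opt_step.
  apply Rmin_glb_lt; [apply Rmin_glb_lt|]; nra.
Qed.

Definition threshold (eps delta : R) : R := (1 - delta) / (exp eps + 1).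

Definition pi_linear (eps delta : R) (n : nat) : R :=
  delta * (exp eps ^ n - 1) / (exp eps - 1).

Definition active_horizon (eps delta : R) : R :=
  / eps * ln ((exp eps + 2 * delta - 1) / (delta * (exp eps + 1))).

Section Regimes.

Variables eps delta : R.
Hypothesis heps : 0 < eps.
Hypothesis hd0 : 0 < delta.
Hypothesis hd1 : delta < 1.

Lemma exp_gt_1 : 1 < exp eps.
Proof. rewrite <- exp_0. apply exp_increasing. exact heps. Qed.

Lemma threshold_bounds : 0 <= threshold eps delta < 1.
Proof.
  pose proof exp_gt_1. unfold threshold. split.
  - apply Rmult_le_pos; [lra|]. apply Rlt_le, Rinv_0_lt_compat; lra.
  - apply (Rmult_lt_reg_l (exp eps + 1)); [lra|].
    replace ((exp eps + 1) * ((1 - delta) / (exp eps + 1))) with (1 - delta)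
      by (field; lra).
    lra.
Qed.

Lemma pi_linear_S (n : nat) :
  pi_linear eps delta (S n) = exp eps * pi_linear eps delta n + delta.
Proof. pose proof exp_gt_1. unfold pi_linear. simpl. field. lra. Qed.

Lemma threshold_lt_pi_linear_iff (n : nat) :
  threshold eps delta < pi_linear eps delta n <-> active_horizon eps delta < INR n.
Proof.
  pose proof exp_gt_1 as Ha.
  set (X := (exp eps + 2 * delta - 1) / (delta * (exp eps + 1))).
  assert (HX : 0 < X).
  { unfold X. apply Rdiv_lt_0_compat; nra. }
  assert (Hpow : 0 < exp eps ^ n) by (apply pow_lt; lra).
  (* The crossing point is the geometric sum evaluated at the real exponent [ln X / eps]. *)
  assert (Hgap : pi_linear eps delta n - threshold eps delta
                 = delta / (exp eps - 1) * (exp eps ^ n - X)).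
  { unfold pi_linear, threshold, X. field. split; nra. }
  assert (Hcoef : 0 < delta / (exp eps - 1)) by (apply Rdiv_lt_0_compat; lra).
  assert (Hln : ln (exp eps ^ n) = INR n * eps) by (rewrite ln_pow, ln_exp; lra).
  transitivity (X < exp eps ^ n).
  { split; intro H.
    - destruct (Rle_lt_dec (exp eps ^ n) X); [|assumption]. nra.
    - nra. }
  transitivity (ln X < INR n * eps).
  { rewrite <- Hln. split; [apply ln_increasing | apply ln_lt_inv]; assumption. }
  unfold active_horizon. fold X.
  split; intro H.
  - apply (Rmult_lt_reg_l eps); [exact heps|].
    replace (eps * (/ eps * ln X)) with (ln X) by (field; lra). lra.
  - apply (Rmult_lt_compat_l eps) in H; [|exact heps].
    replace (eps * (/ eps * ln X)) with (ln X) in H by (field; lra). lra.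
Qed.

Lemma pi_opt_regimes (n : nat) :
  (INR n <= active_horizon eps delta -> pi_opt eps delta n = pi_linear eps delta n) /\
  (active_horizon eps delta < INR n -> threshold eps delta < pi_opt eps delta n).
Proof.
  pose proof exp_gt_1 as Ha. pose proof threshold_bounds as Hthr.
  induction n as [|n [IHlin IHhigh]].
  - assert (Hlin0 : pi_linear eps delta 0 = 0) by (unfold pi_linear; simpl; field; lra).
    split; intro H.
    + rewrite Hlin0. reflexivity.
    + apply threshold_lt_pi_linear_iff in H. lra.
  - pose proof (threshold_lt_pi_linear_iff n) as Hiff.
    pose proof (threshold_lt_pi_linear_iff (S n)) as Hiff_S.
    rewrite S_INR in Hiff_S |- *.
    assert (Hlin : INR n <= active_horizon eps delta ->
                   pi_opt eps delta (S n) = pi_linear eps delta (S n)).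
    { intro Hn. rewrite pi_opt_S, IHlin, pi_linear_S by exact Hn.
      apply pi_opt_step_linear; [lra|lra|].
      apply Rnot_lt_le. rewrite Hiff. lra. }
    split; intro H.
    + apply Hlin. lra.
    + destruct (Rle_lt_dec (INR n) (active_horizon eps delta)) as [Hn|Hn].
      * rewrite Hlin by exact Hn. apply Hiff_S. exact H.
      * rewrite pi_opt_S. apply pi_opt_step_gt; [lra|lra|lra|]. apply IHhigh. exact Hn.
Qed.

Lemma pi_opt_le_threshold_iff (n : nat) :
  pi_opt eps delta n <= threshold eps delta <-> INR n <= active_horizon eps delta.
Proof.
  destruct (pi_opt_regimes n) as [Hlin Hhigh].
  pose proof (threshold_lt_pi_linear_iff n) as Hiff.
  split; intro H.
  - apply Rnot_lt_le. intro Hlt. apply Hhigh in Hlt. lra.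
  - rewrite Hlin by exact H. apply Rnot_lt_le. rewrite Hiff. lra.
Qed.

End Regimes.

Lemma INR_le_iff_le_floorR (r : R) (n : nat) :
  INR n <= r <-> (Z.of_nat n <= floorR r)%Z.
Proof.
  destruct (base_Int_part r) as [Hlo Hhi]. unfold floorR.
  rewrite INR_IZR_INZ. split; intro H.
  - apply Zlt_succ_le, lt_IZR. rewrite succ_IZR. lra.
  - apply IZR_le in H. lra.
Qed.

Theorem lemma4 (eps delta : R) (heps : 0 < eps) (hd0 : 0 < delta) (hd1 : delta < 1) :
  exists n1 : nat,
    (1 <= n1)%nat /\
    pi_opt eps delta (n1 - 1) <= (1 - delta) / (exp eps + 1) /\
    (forall n : nat, (1 <= n)%nat ->
       pi_opt eps delta (n - 1) <= (1 - delta) / (exp eps + 1) -> (n <= n1)%nat) /\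
    Z.of_nat n1 =
      (1 + floorR (/ eps * ln ((exp eps + 2 * delta - 1) / (delta * (exp eps + 1)))))%Z.
Proof.
  change ((1 - delta) / (exp eps + 1)) with (threshold eps delta).
  change (/ eps * ln ((exp eps + 2 * delta - 1) / (delta * (exp eps + 1))))
    with (active_horizon eps delta).
  pose proof (pi_opt_le_threshold_iff eps delta heps hd0 hd1) as Hiff.
  destruct (threshold_bounds eps delta heps hd0 hd1) as [Hthr _].
  set (L := active_horizon eps delta) in *.
  assert (HF0 : (0 <= floorR L)%Z).
  { apply (INR_le_iff_le_floorR L 0), Hiff. exact Hthr. }
  exists (Z.to_nat (1 + floorR L)).
  split; [|split; [|split]].
  - lia.
  - apply Hiff, INR_le_iff_le_floorR. lia.
  - intros n Hn Hle. apply Hiff, INR_le_iff_le_floorR in Hle. lia.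
  - lia.
Qed.
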